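(* Let $n\ge 1$ and let $\mathbf x=(x_1,\dots,x_n)\in[0,1]^n$ be any profile. Let $n_1=|\{i: x_i\in[0,\tfrac12]\}|$ and $n_2=|\{i: x_i\in(\tfrac12,1]\}|$. The Majority Vote mechanism outputs $y=0$ if $n_1\le n_2$ and $y=1$ otherwise. Then for every finite $p>0$, $$\max_{z\in[0,1]}\Big(\sum_{i=1}^n |x_i-z|^p\Big)^{1/p}\le (2^p+1)^{1/p}\Big(\sum_{i=1}^n |x_i-y|^p\Big)^{1/p},$$ and $$\max_{z\in[0,1]}\max_{i}|x_i-z|\le 2\max_i |x_i-y|.$$ That is, Majority Vote is a $(2^p+1)^{1/p}$-approximation for the $L_p$ social utility for every finite $p>0$ and a $2$-approximation for the $L_\infty$ social utility (maximum utility).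
   Context: Obnoxious facility location on $[0,1]$: $n$ agents report locations $x_i\in[0,1]$; a facility is placed at $y\in[0,1]$; agent $i$'s utility is $u(x_i,y)=|x_i-y|$. The $L_p$ social utility of $y$ is $\mathrm{su}_p(y,\mathbf x)=(\sum_i u(x_i,y)^p)^{1/p}$, and for $p=+\infty$ it is $\max_i u(x_i,y)$. A deterministic mechanism $f$ is an $\alpha$-approximation if $\max_{z\in[0,1]}\mathrm{su}_p(z,\mathbf x)\le \alpha\,\mathrm{su}_p(f(\mathbf x),\mathbf x)$ for all profiles $\mathbf x$. *)

From mathcomp Require Import all_boot all_order all_algebra.
From mathcomp Require Import all_classical all_reals all_analysis.
Set Implicit Arguments. Unset Strict Implicit. Unset Printing Implicit Defensive.
Import Order.TTheory GRing.Theory Num.Theory.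
Local Open Scope ring_scope.

Definition util (R : realType) (a y : R) : R := `|a - y|.

Definition su_p (R : realType) (n : nat) (p : R) (y : R) (x : 'I_n -> R) : R :=
  (\sum_(i < n) util (x i) y `^ p) `^ p^-1.

(* L_infinity social utility: max_i u(x_i, y) (all terms are >= 0) *)
Definition su_inf (R : realType) (n : nat) (y : R) (x : 'I_n -> R) : R :=
  \big[Num.max/0]_(i < n) util (x i) y.

Definition n1 (R : realType) (n : nat) (x : 'I_n -> R) : nat :=
  #|[set i : 'I_n | (0 <= x i) && (x i <= 1/2)]|.
Definition n2 (R : realType) (n : nat) (x : 'I_n -> R) : nat :=
  #|[set i : 'I_n | (1/2 < x i) && (x i <= 1)]|.
Definition majority_vote (R : realType) (n : nat) (x : 'I_n -> R) : R :=
  if (n1 x <= n2 x)%N then 0 else 1.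

From mathcomp Require Import all_boot all_order all_algebra.
From mathcomp Require Import all_classical all_reals all_analysis.
From mathcomp Require Import lra.
Import Order.TTheory GRing.Theory Num.Theory.
Local Open Scope ring_scope.

(** Call agent [i] far from the outcome [y] of Majority Vote when
    [|x_i - y| >= 1/2].  Since [y] is an endpoint of [[0, 1]], no other
    location is farther from a far agent than [y], and the majority rule puts
    at least as many agents far from [y] as near it.  Every near agent has
    utility at most [1], and every far agent has [(2 |x_i - y|)^p >= 1], so
    the near agents can be charged to the far ones at a cost of [2^p] each;
    this gives the [L_p] bound.  For [L_oo], a far agent already has utility
    [1/2] under [y], while no agent has utility above [1]. *)

Lemma sum_le_charged (R : realDomainType) (I : finType) (P : pred I)
    (a b : I -> R) (c : R) :
  0 <= c -> (forall i, 0 <= b i) ->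
  (forall i, P i -> a i <= b i) -> (forall i, P i -> 1 <= c * b i) ->
  (forall i, ~~ P i -> a i <= 1) -> (#|predC P| <= #|P|)%N ->
  \sum_i a i <= (c + 1) * \sum_i b i.
Proof.
move=> c_ge0 b_ge0 leab le1cb lea1 cardPC.
have near_le : \sum_(i | ~~ P i) a i <= c * \sum_(i | P i) b i.
  apply: le_trans (_ : #|predC P|%:R <= _).
    by rewrite -sum1_card natr_sum ler_sum.
  apply: le_trans (_ : #|P|%:R <= _); first by rewrite ler_nat.
  by rewrite -sum1_card natr_sum mulr_sumr ler_sum.
have far_le : \sum_(i | P i) a i <= \sum_(i | P i) b i by exact: ler_sum.
have sumPb_le : \sum_(i | P i) b i <= \sum_i b i.
  by rewrite [leRHS](bigID P) /= lerDl sumr_ge0.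
rewrite (bigID P) /= mulrDl mul1r addrC.
apply: le_trans (lerD near_le far_le) _.
by rewrite lerD // ?ler_wpM2l.
Qed.

Lemma ler_powR_inv_mul (R : realType) (p a b c : R) :
  0 < p -> 0 <= a -> 0 <= b -> 0 <= c -> a <= c * b ->
  a `^ p^-1 <= c `^ p^-1 * b `^ p^-1.
Proof.
move=> p_gt0 a_ge0 b_ge0 c_ge0 le_acb; rewrite -powRM //.
by apply: ge0_ler_powR; rewrite ?invr_ge0 ?nnegrE ?mulr_ge0 ?(ltW p_gt0).
Qed.

Section UnitInterval.
Variable R : realFieldType.

Lemma unit_dist_le1 (a z : R) : 0 <= a <= 1 -> 0 <= z <= 1 -> `|a - z| <= 1.
Proof. by move=> /andP[? ?] /andP[? ?]; rewrite ler_norml; apply/andP; lra. Qed.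

Lemma unit_dist_le_far_end (a y z : R) : y = 0 \/ y = 1 ->
  0 <= a <= 1 -> 0 <= z <= 1 -> 1/2 <= `|a - y| -> `|a - z| <= `|a - y|.
Proof.
move=> + /andP[a0 a1] /andP[z0 z1].
case=> ->.
  by rewrite subr0 ger0_norm // => ha; rewrite ler_norml; apply/andP; lra.
by rewrite distrC ger0_norm ?subr_ge0 // => ha; rewrite ler_norml; apply/andP; lra.
Qed.

End UnitInterval.

Section MajorityVote.
Context {R : realType} {n : nat} {x : 'I_n -> R}.
Hypothesis x01 : forall i, 0 <= x i <= 1.

Let y := majority_vote x.
Let far := [pred i | 1/2 <= `|x i - y|].

Lemma majority_vote01 : y = 0 \/ y = 1.
Proof. by rewrite /y /majority_vote; case: ifP; auto. Qed.

Lemma card_near_le_far : (#|predC far| <= #|far|)%N.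
Proof.
rewrite /far /y /majority_vote /n1 /n2.
case: ifP => [le12|/negbT]; last rewrite -ltnNge => /ltnW.
- apply: leq_trans (leq_trans le12 _);
    apply: subset_leq_card; apply/fintype.subsetP => i; rewrite !inE subr0;
    have /andP[x0 x1] := x01 i; rewrite ger0_norm //.
    by rewrite -ltNge => ?; apply/andP; lra.
  by case/andP => ? _; lra.
- move=> le21; apply: leq_trans (leq_trans le21 _);
    apply: subset_leq_card; apply/fintype.subsetP => i; rewrite !inE;
    have /andP[x0 x1] := x01 i; rewrite distrC ger0_norm ?subr_ge0 //.
    by rewrite -ltNge => ?; apply/andP; lra.
  by case/andP => _ ?; lra.
Qed.

Lemma exists_far : (0 < n)%N -> exists i, far i.
Proof.
move=> n_gt0; case: (pickP far) => [i fi|nofar]; first by exists i.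
have := card_near_le_far; rewrite (eq_card0 nofar) leqn0.
rewrite (eq_card (fun i => negbT (nofar i))) card_ord => /eqP n0.
by rewrite n0 in n_gt0.
Qed.

Lemma sum_powR_le_majority (p z : R) : 0 < p -> 0 <= z <= 1 ->
  \sum_i `|x i - z| `^ p <= (2 `^ p + 1) * \sum_i `|x i - y| `^ p.
Proof.
move=> p_gt0 z01; have p_ge0 := ltW p_gt0.
have one_powR : 1 `^ p = 1 by rewrite powR1.
apply: sum_le_charged card_near_le_far => [||i fi|i fi|i _].
- exact: powR_ge0.
- by move=> i; apply: powR_ge0.
- apply: (ge0_ler_powR p_ge0); rewrite ?nnegrE //.
  exact: unit_dist_le_far_end majority_vote01 (x01 i) z01 fi.
- rewrite -powRM // -[leLHS]one_powR.
  by apply: (ge0_ler_powR p_ge0); rewrite ?nnegrE //; move: fi; rewrite inE; lra.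
- rewrite -[leRHS]one_powR; apply: (ge0_ler_powR p_ge0); rewrite ?nnegrE //.
  exact: unit_dist_le1.
Qed.

End MajorityVote.

Theorem theorem1 (R : realType) (n : nat) (x : 'I_n -> R) :
  (1 <= n)%N ->
  (forall i, 0 <= x i <= 1) ->
  (forall p : R, 0 < p ->
     forall z : R, 0 <= z <= 1 ->
       su_p p z x <= (2 `^ p + 1) `^ p^-1 * su_p p (majority_vote x) x) /\
  (forall z : R, 0 <= z <= 1 ->
       su_inf z x <= 2 * su_inf (majority_vote x) x).
Proof.
move=> n_gt0 x01; split=> [p p_gt0 z z01|z z01].
  have sum_ge0 w : 0 <= \sum_i util (x i) w `^ p.
    by apply: sumr_ge0 => i _; apply: powR_ge0.
  apply: ler_powR_inv_mul; rewrite ?addr_ge0 ?powR_ge0 ?sum_ge0 //.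
  exact: sum_powR_le_majority.
have [j far_j] := exists_far x01 n_gt0.
have su_inf_le1 : su_inf z x <= 1.
  by apply: bigmax_le => // i _; apply: unit_dist_le1.
have le_su_inf : util (x j) (majority_vote x) <= su_inf (majority_vote x) x.
  exact: le_bigmax.
apply: le_trans su_inf_le1 (le_trans _ (ler_wpM2l _ le_su_inf)) => //.
by move: far_j; rewrite inE /util; lra.
Qed.
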